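(* Let $n,m\geq1$, $G=S_n^m$ and $H=S_n$ embedded diagonally in $G$. For $g=(\sigma_1,\dots,\sigma_m)\in G$: (1) $H_g=\mathrm{Aut}_{F_m^0}(Q_{(\sigma_i)})=C_{S_n}(\phi_{(\sigma_i)}(F_m^0))$ (identifying $H$ with $S_n$). (2) For $(\sigma_i),(\tau_i)\in S_n^m$ we have $(\sigma_i)\sim(\tau_i)$ if and only if $Q_{(\sigma_i)}\cong Q_{(\tau_i)}$ as $F_m^0$-sets.
   Context: For a finite group $G$, a subgroup $H$ and $x\in G$, set $H_x=\bigcap_{i\in\mathbb{Z}}x^iHx^{-i}$ and $S_x=H_x\cdot x\subseteq G$; define $x\sim y$ if there is $h\in H$ with $hS_xh^{-1}=S_y$. $F_m$ is the free group on $z_1,\dots,z_m$, $\upsilon:F_m\to\mathbb{Z}$ is the homomorphism with $\upsilon(z_i)=1$ for all $i$, and $F_m^0=\ker\upsilon$. For $(\sigma_i)\in S_n^m$, $\phi_{(\sigma_i)}:F_m\to S_n$ is the homomorphism with $z_i\mapsto\sigma_i$, and $Q_{(\sigma_i)}$ is the set $\{1,\dots,n\}$ with the $F_m$-action via $\phi_{(\sigma_i)}$ (and, by restriction, the $F_m^0$-action). $C_{S_n}(\cdot)$ denotes the centralizer. *)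

From HB Require Import structures.
From mathcomp Require Import all_boot all_order all_algebra all_fingroup.
Set Implicit Arguments. Unset Strict Implicit. Unset Printing Implicit Defensive.

Local Open Scope group_scope.

Definition SnPow (n m : nat) : Type := {ffun 'I_m -> 'S_n}.

Section SnPowGroup.
Variables n m : nat.
HB.instance Definition _ := Finite.on (SnPow n m).

Definition spmul (x y : SnPow n m) : SnPow n m := [ffun j => x j * y j].
Definition spone : SnPow n m := [ffun _ => 1].
Definition spinv (x : SnPow n m) : SnPow n m := [ffun j => (x j)^-1].

Lemma spmulA : associative spmul.
Proof. by move=> x y z; apply/ffunP=> j; rewrite !ffunE mulgA. Qed.
Lemma spmul1 : left_id spone spmul.
Proof. by move=> x; apply/ffunP=> j; rewrite !ffunE mul1g. Qed.
Lemma spmulV : left_inverse spone spinv spmul.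
Proof. by move=> x; apply/ffunP=> j; rewrite !ffunE mulVg. Qed.

HB.instance Definition _ :=
  Finite_isGroup.Build (SnPow n m) spmulA spmul1 spmulV.

Lemma SnPow_mulE (x y : SnPow n m) j : (x * y) j = x j * y j.
Proof. by rewrite /= ffunE. Qed.

Definition tupleG (s : 'I_m -> 'S_n) : SnPow n m := [ffun j => s j].

Definition diag (h : 'S_n) : SnPow n m := [ffun _ => h].

Definition Hdiag : {set SnPow n m} := [set diag h | h : 'S_n].
End SnPowGroup.

Section Cores.
Variable gT : finGroupType.

(* H_x = \bigcap_{i in Z} x^i H x^{-i}.  Since x has finite order #[x], the
   powers x^i (i in Z) are exactly x^i for 0 <= i < #[x]; and in mathcomp
   H :^ y = y^-1 H y, so x^i H x^-i = H :^ (x ^- i). *)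
Definition Hcore (H : {set gT}) (x : gT) : {set gT} :=
  \bigcap_(i < #[x]) (H :^ (x ^- i)).

Definition Sx (H : {set gT}) (x : gT) : {set gT} := Hcore H x :* x.

Definition simH (H : {set gT}) (x y : gT) : Prop :=
  exists2 h, h \in H & Sx H x :^ h^-1 = Sx H y.
End Cores.

(* Elements of F_m are represented by (not necessarily reduced) words in the
   letters z_i^{+1} (i, false) and z_i^{-1} (i, true); every element of F_m is
   represented by a word, and upsilon and phi below are the homomorphisms
   described in the paper, computed on any representing word (they are
   invariant under free reduction). *)
Definition fword (m : nat) := seq ('I_m * bool).

Definition upsilon (m : nat) (w : fword m) : int :=
  (\sum_(l <- w) (if l.2 then (-1)%R else 1%R))%R.

Definition in_F0 (m : nat) (w : fword m) : Prop := upsilon w = 0%R.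

Definition phi (n m : nat) (s : 'I_m -> 'S_n) (w : fword m) : 'S_n :=
  \prod_(l <- w) (if l.2 then (s l.1)^-1 else s l.1).

(* Aut_{F_m^0}(Q_(sigma_i)): bijections of {1..n} commuting with the
   F_m^0-action on Q_(sigma_i) (action of w is the permutation phi w). *)
Definition AutF0 (n m : nat) (s : 'I_m -> 'S_n) (h : 'S_n) : Prop :=
  forall w : fword m, in_F0 w -> forall x : 'I_n, h (phi s w x) = phi s w (h x).

Definition inCentPhiF0 (n m : nat) (s : 'I_m -> 'S_n) (h : 'S_n) : Prop :=
  forall w : fword m, in_F0 w -> commute h (phi s w).

Definition isoF0 (n m : nat) (s t : 'I_m -> 'S_n) : Prop :=
  exists f : 'S_n, forall w : fword m, in_F0 w ->
    forall x : 'I_n, f (phi s w x) = phi t w (f x).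

(* H_x is the largest subgroup of H normalised by x.  For x = (sigma_i) and H
   the diagonal copy of S_n, diag a lies in H_x iff the conjugates
   a ^ sigma_j ^+ k do not depend on j, and this says exactly that a commutes
   with phi(F_m^0): a word of total degree 0 moves the orbit
   k |-> a ^ sigma_j0 ^+ k forth and back by the same amount.  The same orbit
   argument for the two-sided action of S_n * S_n on S_n shows that
   multiplying every sigma_i on the left by such an a leaves phi unchanged on
   F_m^0.  Finally S_x = H_x x only depends on the coset H_x x and is
   equivariant under conjugation by H, so x ~ y means that y is, up to such a
   twist, a simultaneous conjugate of x, i.e. that Q_x and Q_y are isomorphic
   F_m^0-sets. *)

From mathcomp Require Import all_boot all_order all_algebra all_fingroup.
From mathcomp Require Import zify.
Set Implicit Arguments. Unset Strict Implicit. Unset Printing Implicit Defensive.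
Local Open Scope group_scope.

Section Words.
Variable m : nat.
Implicit Types v w : fword m.

Definition wordval (gT : finGroupType) (g : 'I_m -> gT) w : gT :=
  \prod_(l <- w) (if l.2 then (g l.1)^-1 else g l.1).

Definition invw w : fword m := rev [seq (l.1, ~~ l.2) | l <- w].

Lemma phiE n (s : 'I_m -> 'S_n) w : phi s w = wordval s w.
Proof. by []. Qed.

Section Wordval.
Variables (gT : finGroupType) (g : 'I_m -> gT).

Lemma wordval_nil : wordval g [::] = 1.
Proof. by rewrite /wordval big_nil. Qed.

Lemma wordval_cons l w :
  wordval g (l :: w) = (if l.2 then (g l.1)^-1 else g l.1) * wordval g w.
Proof. by rewrite /wordval big_cons. Qed.

Lemma wordval_cat v w : wordval g (v ++ w) = wordval g v * wordval g w.
Proof. by rewrite /wordval big_cat. Qed.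

Lemma wordval_nseq j i : wordval g (nseq i (j, false)) = g j ^+ i.
Proof. by elim: i => [|i IH]; rewrite ?wordval_nil // wordval_cons IH expgS. Qed.

Lemma wordval_invw w : wordval g (invw w) = (wordval g w)^-1.
Proof.
elim: w => [|l w IH]; first by rewrite wordval_nil invg1.
rewrite /invw map_cons rev_cons -cats1 wordval_cat -/(invw w) IH.
rewrite !wordval_cons wordval_nil mulg1 invMg.
by case: l.2; rewrite ?invgK.
Qed.

Lemma wordval_conjw v w :
  wordval g (v ++ w ++ invw v) = wordval g w ^ (wordval g v)^-1.
Proof. by rewrite !wordval_cat wordval_invw /conjg invgK mulgA. Qed.

End Wordval.

Lemma wordval_conj (gT : finGroupType) (g : 'I_m -> gT) f w :
  wordval (fun j => g j ^ f) w = wordval g w ^ f.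
Proof.
elim: w => [|l w IH]; first by rewrite !wordval_nil conj1g.
by rewrite !wordval_cons IH conjMg; case: l.2; rewrite ?conjVg.
Qed.

Lemma wordval_pair (gT1 gT2 : finGroupType) (g1 : 'I_m -> gT1)
    (g2 : 'I_m -> gT2) w :
  wordval (fun j => (g1 j, g2 j)) w = (wordval g1 w, wordval g2 w).
Proof.
elim: w => [|l w IH]; first by rewrite !wordval_nil.
by rewrite !wordval_cons IH; case: l.2.
Qed.

Lemma upsilon_cons l w :
  upsilon (l :: w) = ((if l.2 then (-1)%R else 1%R) + upsilon w)%R.
Proof. by rewrite /upsilon big_cons. Qed.

Lemma upsilon_cat v w : upsilon (v ++ w) = (upsilon v + upsilon w)%R.
Proof. by rewrite /upsilon big_cat. Qed.

Lemma upsilon_nseq (j : 'I_m) i : upsilon (nseq i (j, false)) = Posz i.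
Proof.
elim: i => [|i IH]; first by rewrite /upsilon big_nil.
by rewrite upsilon_cons IH /=; lia.
Qed.

Lemma upsilon_invw w : upsilon (invw w) = (- upsilon w)%R.
Proof.
elim: w => [|l w IH]; first by rewrite /upsilon big_nil.
rewrite /invw map_cons rev_cons -cats1 upsilon_cat -/(invw w) IH.
by rewrite !upsilon_cons /upsilon big_nil; case: l.2 => /=; lia.
Qed.

Lemma in_F0_cat v w : upsilon v = (- upsilon w)%R -> in_F0 (v ++ w).
Proof. by rewrite /in_F0 upsilon_cat => ->; rewrite GRing.addNr. Qed.

Lemma F0_conjw v w : in_F0 w -> in_F0 (v ++ w ++ invw v).
Proof. by rewrite /in_F0 catA !upsilon_cat upsilon_invw => ->; lia. Qed.

(* An inverse letter weighs [N.-1] instead of [-1], so [weight N w] is a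
   natural number congruent to [upsilon w] modulo [N]. *)
Definition weight N w : nat := \sum_(l <- w) (if l.2 then N.-1 else 1).

Lemma weight_F0 N w : 0 < N -> in_F0 w -> weight N w = (N * count snd w)%N.
Proof.
move=> N_gt0; rewrite /in_F0.
suff -> : upsilon w = (Posz (weight N w) - Posz (N * count snd w)%N)%R by lia.
elim: w => [|l w IH]; first by rewrite /upsilon /weight !big_nil muln0.
rewrite upsilon_cons IH /weight big_cons -/(weight N w) /=.
by case: l.2 => /=; lia.
Qed.

Section WordAction.
Variables (gT : finGroupType) (T : finType) (to : {action gT &-> T}).
Variables (g : 'I_m -> gT) (x : gT) (y : T).
Hypothesis orbit_shift : forall k j, to y (x ^+ k * g j) = to y (x ^+ k.+1).

Lemma act_wordval w k :
  to y (x ^+ k * wordval g w) = to y (x ^+ (k + weight #[x] w)).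
Proof.
elim: w k => [|[j b] w IH] k.
  by rewrite wordval_nil mulg1 /weight big_nil addn0.
rewrite wordval_cons /weight big_cons -/(weight _ w) mulgA actM.
suff -> : to y (x ^+ k * (if b then (g j)^-1 else g j)) =
          to y (x ^+ (k + if b then #[x].-1 else 1%N)) by rewrite -actM IH addnA.
case: b; last by rewrite orbit_shift addn1.
rewrite actM; apply: (canLR (actK to (g j))).
rewrite -actM orbit_shift -addnS prednK ?order_gt0 //.
by rewrite expgD expg_order mulg1.
Qed.

Lemma act_wordval_F0 w : in_F0 w -> to y (wordval g w) = y.
Proof.
move=> F0w; have := act_wordval w 0; rewrite expg0 mul1g => ->.
by rewrite (weight_F0 (order_gt0 x) F0w) expgM expg_order expg1n act1.
Qed.
End WordAction.
End Words.

Section Cores.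
Variables (gT : finGroupType) (H : {group gT}).
Implicit Types x y g h : gT.

Lemma Hcore_group_set x : group_set (Hcore H x).
Proof. exact: groupP. Qed.

Canonical Hcore_group x := Group (Hcore_group_set x).

Lemma mem_Hcore x y : y \in Hcore H x <-> forall i, y ^ (x ^+ i) \in H.
Proof.
split=> [/bigcapP yH i | yH].
  have := yH (Ordinal (ltn_pmod i (order_gt0 x))) isT.
  by rewrite mem_conjg invgK expg_mod_order.
by apply/bigcapP => i _; rewrite mem_conjg invgK.
Qed.

Lemma Hcore_sub x : Hcore H x \subset H.
Proof. by apply/subsetP => y /mem_Hcore/(_ 0); rewrite conjg1. Qed.

Lemma Hcore_norm x : x \in 'N(Hcore H x).
Proof.
rewrite inE; apply/subsetP => _ /imsetP[y /mem_Hcore yH ->]; apply/mem_Hcore => i.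
by rewrite -conjgM -expgS.
Qed.

Lemma sub_Hcore (K : {group gT}) x :
  K \subset H -> x \in 'N(K) -> K \subset Hcore H x.
Proof.
move=> sKH nKx; apply/subsetP => y Ky; apply/mem_Hcore => i.
by apply: (subsetP sKH); rewrite memJ_norm ?groupX.
Qed.

Lemma Hcore_conj x g : g \in H -> Hcore H (x ^ g) = Hcore H x :^ g.
Proof.
have le x1 g1 : g1 \in H -> Hcore H x1 :^ g1 \subset Hcore H (x1 ^ g1).
  move=> Hg1; apply: sub_Hcore; first by rewrite -(conjGid Hg1) conjSg Hcore_sub.
  by rewrite normJ memJ_conjg Hcore_norm.
move=> Hg; apply/eqP; rewrite eqEsubset le // -sub_conjgV.
by rewrite -{2}(conjgK g x) le ?groupV.
Qed.

Lemma Hcore_mull x h : h \in Hcore H x -> Hcore H (h * x) = Hcore H x.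
Proof.
move=> Kh; have nKhx : h * x \in 'N(Hcore H x).
  by rewrite groupM ?Hcore_norm // (subsetP (normG _)).
have sub : Hcore H x \subset Hcore H (h * x) by rewrite sub_Hcore ?Hcore_sub.
apply/eqP; rewrite eqEsubset sub andbT sub_Hcore ?Hcore_sub //.
have Kh' : h^-1 \in Hcore H (h * x) by rewrite groupV (subsetP sub).
by rewrite -[x in x \in _](mulKg h) groupM ?Hcore_norm // (subsetP (normG _)).
Qed.

Lemma Sx_conj x g : g \in H -> Sx H (x ^ g) = Sx H x :^ g.
Proof. by move=> Hg; rewrite /Sx Hcore_conj // conjsMg conjg_set1. Qed.

Lemma Sx_mull x h : h \in Hcore H x -> Sx H (h * x) = Sx H x.
Proof. by move=> Kh; rewrite /Sx Hcore_mull // rcosetM rcoset_id. Qed.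
End Cores.

Section SnPowFacts.
Variables n m : nat.
Implicit Types (x y : SnPow n m) (a b c f : 'S_n) (s : 'I_m -> 'S_n).

Lemma SnPow_invE x j : x^-1 j = (x j)^-1.
Proof. by rewrite /= ffunE. Qed.

Lemma SnPow_expE x i j : (x ^+ i) j = x j ^+ i.
Proof. by elim: i => [|i IH]; rewrite ?ffunE // !expgS SnPow_mulE IH. Qed.

Lemma SnPow_conjE x y j : (x ^ y) j = x j ^ y j.
Proof. by rewrite !SnPow_mulE SnPow_invE. Qed.

Lemma tupleGE s j : tupleG s j = s j.
Proof. exact: ffunE. Qed.

Lemma diagE a j : diag m a j = a.
Proof. exact: ffunE. Qed.

Lemma diag_mulE c s : diag m c * tupleG s = tupleG (fun j => c * s j).
Proof. by apply/ffunP => j; rewrite SnPow_mulE !ffunE. Qed.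

Lemma tupleG_conj_diag s f : tupleG s ^ diag m f = tupleG (fun j => s j ^ f).
Proof. by apply/ffunP => j; rewrite SnPow_conjE !ffunE. Qed.

Lemma diagV a : (diag m a)^-1 = diag m a^-1.
Proof. by apply/ffunP => j; rewrite SnPow_invE !ffunE. Qed.

Lemma mem_diag a : diag m a \in Hdiag n m.
Proof. exact: imset_f. Qed.

Lemma Hdiag_group_set : group_set (Hdiag n m).
Proof.
apply/group_setP; split.
  by rewrite (_ : 1 = diag m 1) ?mem_diag //; apply/ffunP => j; rewrite !ffunE.
move=> _ _ /imsetP[a _ ->] /imsetP[b _ ->].
rewrite (_ : _ * _ = diag m (a * b)) ?mem_diag //.
by apply/ffunP => j; rewrite !ffunE.
Qed.

Canonical Hdiag_group := Group Hdiag_group_set.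

Lemma mem_Hdiag (j0 : 'I_m) x : x \in Hdiag n m <-> forall j k, x j = x k.
Proof.
split=> [/imsetP[a _ ->] j k | xdiag]; first by rewrite !diagE.
by rewrite (_ : x = diag m (x j0)) ?mem_diag //; apply/ffunP => j; rewrite diagE.
Qed.
End SnPowFacts.

Section TwoSidedMul.
Variable gT : finGroupType.

Definition twomul (z : gT) (pq : gT * gT) : gT := pq.1^-1 * z * pq.2.

Lemma twomul1 : twomul^~ 1 =1 id.
Proof. by move=> z; rewrite /twomul /= invg1 mul1g mulg1. Qed.

Lemma twomulM z : act_morph twomul z.
Proof. by move=> p q; rewrite /twomul /= invMg !mulgA. Qed.

Definition twomul_action := TotalAction twomul1 twomulM.
End TwoSidedMul.

Section Centraliser.
Variables (n m : nat) (j0 : 'I_m).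
Implicit Types (s t : 'I_m -> 'S_n) (a c : 'S_n) (w : fword m).

Lemma eq_phi s t w : s =1 t -> phi s w = phi t w.
Proof. by move=> eq_st; apply: eq_bigr => l _; rewrite eq_st. Qed.

Lemma centF0M s a c : inCentPhiF0 s a -> inCentPhiF0 s c -> inCentPhiF0 s (a * c).
Proof.
move=> Ca Cc w F0w.
by apply/commute_sym/commuteM; apply/commute_sym; [exact: Ca | exact: Cc].
Qed.

Lemma centF0V s a : inCentPhiF0 s a -> inCentPhiF0 s a^-1.
Proof. by move=> Ca w F0w; apply/commute_sym/commuteV/commute_sym/Ca. Qed.

Lemma centF0J s a j : inCentPhiF0 s a -> inCentPhiF0 s (a ^ s j).
Proof.
move=> Ca w F0w; have := Ca _ (F0_conjw [:: (j, false)] F0w).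
rewrite phiE wordval_conjw wordval_cons wordval_nil mulg1 /= -phiE => comm_aW.
by rewrite /commute -(conjgKV (s j) (phi s w)) -!conjMg comm_aW.
Qed.

Lemma centF0P s a :
  inCentPhiF0 s a <-> forall i j k, a ^ (s j ^+ i) = a ^ (s k ^+ i).
Proof.
split=> [Ca i j k | sync w F0w].
  have F0w : in_F0 (nseq i (j, false) ++ invw (nseq i (k, false))).
    by apply: in_F0_cat; rewrite upsilon_invw GRing.opprK !upsilon_nseq.
  move: (Ca _ F0w); rewrite phiE wordval_cat wordval_invw !wordval_nseq.
  by move/commgP/conjg_fixP; rewrite conjgM => e; rewrite -[a in RHS]e conjgKV.
apply/commgP/conjg_fixP; rewrite phiE.
apply: (act_wordval_F0 (to := 'J) (x := s j0)) => // k j /=.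
by rewrite conjgM -(sync k j j0) -conjgM -expgSr (sync _ j j0).
Qed.

Lemma phi_twist_centF0 s c w :
  inCentPhiF0 s c -> in_F0 w -> phi (fun j => c * s j) w = phi s w.
Proof.
(* [twomul 1] maps the pair of words to (phi (c * s) w)^-1 * phi s w; the orbit
   of 1 under x stays in c times the centraliser, on which every generator
   acts as x does. *)
move=> Cc F0w; pose x := (c * s j0, s j0).
have twomulE z p : twomul z (c * p, p) = (c^-1 * z) ^ p.
  by rewrite /twomul /conjg /= invMg !mulgA.
have orbit_centF0 k : inCentPhiF0 s (c^-1 * twomul 1 (x ^+ k)).
  elim: k => [|k IH]; first by rewrite expg0 twomul1 mulg1; apply: centF0V.
  by rewrite expgSr twomulM twomulE; apply/centF0M/centF0J/IH/centF0V.
have shift k j :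
    twomul_action _ 1 (x ^+ k * (c * s j, s j)) = twomul_action _ 1 (x ^+ k.+1).
  rewrite /= expgSr !twomulM !twomulE.
  by have := (centF0P s _).1 (orbit_centF0 k) 1%N j j0; rewrite !expg1.
have := act_wordval_F0 shift F0w; rewrite /= wordval_pair /twomul /= mulg1.
by move/eqP; rewrite -eq_invg_mul invgK => /eqP.
Qed.

Lemma centF0_phi_twist s c :
  (forall w, in_F0 w -> phi (fun j => c * s j) w = phi s w) -> inCentPhiF0 s c.
Proof.
move=> twistE w F0w; have := twistE _ (F0_conjw [:: (j0, true)] F0w).
rewrite !phiE !wordval_conjw !wordval_cons !wordval_nil !mulg1 /= !invgK.
by rewrite -!phiE twistE // conjgM => /conjg_inj/conjg_fixP/commgP/commute_sym.
Qed.

Lemma F0_eq_phi_twist s t : (forall w, in_F0 w -> phi t w = phi s w) ->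
  exists2 c, inCentPhiF0 s c & forall j, t j = c * s j.
Proof.
move=> tsE; pose c := t j0 * (s j0)^-1.
have tE j : t j = c * s j.
  have F0w : in_F0 (invw [:: (j0, false)] ++ [:: (j, false)]).
    apply: in_F0_cat.
    by rewrite upsilon_invw (upsilon_nseq j0 1) (upsilon_nseq j 1).
  move: (tsE _ F0w).
  rewrite !phiE !wordval_cat !wordval_invw !wordval_cons !wordval_nil /=.
  by rewrite !mulg1 /c -mulgA => <-; rewrite mulKVg.
by exists c => //; apply: centF0_phi_twist => w F0w; rewrite -(eq_phi _ tE) tsE.
Qed.
End Centraliser.

Section DiagonalCores.
Variables (n m : nat) (j0 : 'I_m).
Implicit Types (s t : 'I_m -> 'S_n) (a c f h : 'S_n).

Lemma mem_Hcore_tupleG s y : y \in Hcore (Hdiag n m) (tupleG s) <->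
  exists2 a, y = diag m a & inCentPhiF0 s a.
Proof.
split=> [/mem_Hcore yH | [a -> Ca]].
  have := yH 0%N; rewrite expg0 conjg1 => /imsetP[a _ ya]; exists a => //.
  apply/(centF0P j0) => i j k; have /(mem_Hdiag j0)/(_ j k) := yH i.
  by rewrite !SnPow_conjE !SnPow_expE !tupleGE ya !diagE.
apply/mem_Hcore => i; apply/(mem_Hdiag j0) => j k.
by rewrite !SnPow_conjE !SnPow_expE !tupleGE; exact: (centF0P j0 s a).1 Ca i j k.
Qed.

Lemma AutF0_cent s h : AutF0 s h <-> inCentPhiF0 s h.
Proof.
split=> hE w F0w; first by apply/permP => x; rewrite !permM hE.
by move=> x; rewrite -!permM (hE w F0w).
Qed.

Lemma isoF0_conjP s t :
  isoF0 s t <-> exists f, forall w, in_F0 w -> phi t w = phi s w ^ f.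
Proof.
split=> [[f fE] | [f fE]]; exists f => w F0w.
  by apply/permP => x; rewrite -[x](permKV f) permJ fE.
by move=> x; rewrite fE // permJ.
Qed.

Lemma simH_tupleG s t : simH (Hdiag n m) (tupleG s) (tupleG t) <-> isoF0 s t.
Proof.
rewrite isoF0_conjP; split=> [[_ /imsetP[g _ ->] SxE] | [f tE]].
  pose r j := s j ^ g^-1.
  have : tupleG t \in Sx (Hdiag n m) (tupleG r).
    by rewrite -tupleG_conj_diag Sx_conj ?mem_diag // -diagV SxE rcoset_refl.
  rewrite mem_rcoset => /mem_Hcore_tupleG[c tc Cc].
  have tE : t =1 (fun j => c * r j).
    move=> j; rewrite -[t j]tupleGE -[c * r j](tupleGE (fun j => c * r j)).
    by rewrite -diag_mulE -tc mulgVK.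
  exists g^-1 => w F0w.
  by rewrite (eq_phi w tE) (phi_twist_centF0 j0) // /r !phiE wordval_conj.
pose r j := s j ^ f.
have [c Cc tcE] : exists2 c, inCentPhiF0 r c & forall j, t j = c * r j.
  by apply: (F0_eq_phi_twist j0) => w F0w; rewrite tE // /r !phiE wordval_conj.
exists (diag m f)^-1; first by rewrite groupV mem_diag.
have -> : tupleG t = diag m c * tupleG r.
  by rewrite diag_mulE; apply/ffunP => j; rewrite !tupleGE tcE.
rewrite invgK -Sx_conj ?mem_diag // tupleG_conj_diag Sx_mull //.
by apply/mem_Hcore_tupleG; exists c.
Qed.
End DiagonalCores.

Theorem lemma5p2 (n m : nat) (n_ge1 : 0 < n) (m_ge1 : 0 < m) :
  (forall s : 'I_m -> 'S_n,
     (forall y : SnPow n m,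
        y \in Hcore (Hdiag n m) (tupleG s) <-> exists2 h, y = diag m h & AutF0 s h)
     /\ (forall h : 'S_n, AutF0 s h <-> inCentPhiF0 s h))
  /\
  (forall s t : 'I_m -> 'S_n,
     simH (Hdiag n m) (tupleG s) (tupleG t) <-> isoF0 s t).
Proof.
pose j0 : 'I_m := Ordinal m_ge1.
split=> [s | s t]; last exact: simH_tupleG j0 s t.
split=> [y | h]; last exact: AutF0_cent.
rewrite (mem_Hcore_tupleG j0).
by split=> -[h yh /AutF0_cent Ah]; exists h.
Qed.
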